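(* The $\mathbb{R}$-linear map $$\Theta:\mathbb{R}\otimes_{\mathbb{Z}}\mathcal{H}(\mathcal{Z}_{\mathbb{R}_+})\to\mathbb{R},\quad \begin{bmatrix} s_1,\dots,s_k\\ b_1,\dots,b_k\end{bmatrix}\mapsto f\begin{pmatrix} s_1,\dots,s_k\\ b_1,\dots,b_k\end{pmatrix},\quad 1\mapsto1,$$ is a homomorphism of $\mathbb{R}$-algebras, where the source carries the ($\mathbb{R}$-linear extension of the) product $\diamond$.
   Context: $f\begin{pmatrix} s_1,\dots,s_k\\ b_1,\dots,b_k\end{pmatrix}=\frac{1}{(b_1+\cdots+b_k)^{s_1}(b_2+\cdots+b_k)^{s_2}\cdots b_k^{s_k}}$ for positive integers $s_i$ and positive reals $b_i$. Let $\mathcal{Z}_{\mathbb{R}_+}=\{\begin{bmatrix} r\\ b\end{bmatrix}: r\in\mathbb{Z}_{\ge1}, b\in\mathbb{R}_+\}$, $M(\mathcal{Z}_{\mathbb{R}_+})$ the free monoid on these symbols with words written $\begin{bmatrix} s_1,\dots,s_k\\ b_1,\dots,b_k\end{bmatrix}$ (empty word $1$), $\mathcal{H}(\mathcal{Z}_{\mathbb{R}_+})=\mathbb{Z}M(\mathcal{Z}_{\mathbb{R}_+})$. Let $X=\{x_0\}\sqcup\{x_b:b\in\mathbb{R}_+\}$ and on $\mathbb{Z}M(X)$ let $ш$ be the shuffle product: $1шw=w=wш1$, $(aw')ш(bw'')=a(w'шbw'')+b(aw'шw'')$ for letters $a,b\in X$. Let $\rho$ be the linear bijection from $\mathbb{Z}\oplus\bigoplus_{b}\mathbb{Z}M(X)x_b$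 onto $\mathcal{H}(\mathcal{Z}_{\mathbb{R}_+})$ given by $x_0^{r_1-1}x_{b_1}\cdots x_0^{r_k-1}x_{b_k}\mapsto\begin{bmatrix} r_1,\dots,r_k\\ b_1,\dots,b_k\end{bmatrix}$, $1\mapsto1$, and define $\alpha\diamond\beta=\rho(\rho^{-1}(\alpha)ш\rho^{-1}(\beta))$. *)

From Stdlib Require Import Reals List.
Import ListNotations.
Open Scope R_scope.

(* Alphabet X = {x_0} ⊔ {x_b : b ∈ R_+}.  (Positivity of b is imposed as a
   hypothesis on the words we consider.) *)
Inductive letterX : Type :=
| x0 : letterX
| xb : R -> letterX.

Definition wordX := list letterX.

(* Shuffle product of two words, as the (multi)list of words appearing in the
   Z-linear combination (each with coefficient 1, repetitions counted):
   1 ш w = w = w ш 1,  (a w') ш (b w'') = a (w' ш b w'') + b (a w' ш w''). *)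
Fixpoint shuffle (u : wordX) : wordX -> list wordX :=
  match u with
  | [] => fun v => [v]
  | a :: u' =>
      fix shuf_v (v : wordX) : list wordX :=
        match v with
        | [] => [u]
        | b :: v' =>
            map (cons a) (shuffle u' v) ++ map (cons b) (shuf_v v')
        end
  end.

(* A word of M(Z_{R_+}): [s_1..s_k ; b_1..b_k] as the list of pairs (s_i, b_i). *)
Definition wordZ := list (nat * R).

Definition valid_wordZ (w : wordZ) : Prop :=
  Forall (fun p => (1 <= fst p)%nat /\ 0 < snd p) w.

Fixpoint rho_inv (w : wordZ) : wordX :=
  match w with
  | [] => []
  | (r, b) :: w' => repeat x0 (r - 1) ++ xb b :: rho_inv w'
  end.

(* rho: x0^{r_1-1} x_{b_1} ... x0^{r_k-1} x_{b_k} |-> [r_1..r_k ; b_1..b_k].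
   (Only applied to words that are empty or end in some x_b; trailing x0's,
   which never occur in that domain, are discarded.) *)
Fixpoint rho_aux (cnt : nat) (w : wordX) : wordZ :=
  match w with
  | [] => []
  | x0 :: w' => rho_aux (S cnt) w'
  | xb b :: w' => (S cnt, b) :: rho_aux O w'
  end.
Definition rho (w : wordX) : wordZ := rho_aux O w.

(* Elements of R ⊗_Z H(Z_{R_+}): finite formal R-linear combinations of words,
   represented as lists of (coefficient, word). *)
Definition HR := list (R * wordZ).

Definition valid_HR (a : HR) : Prop := Forall (fun p => valid_wordZ (snd p)) a.

Definition HR_one : HR := [(1, [])].

Definition diamond_word (w1 w2 : wordZ) : list wordZ :=
  map rho (shuffle (rho_inv w1) (rho_inv w2)).

Definition diamond (a b : HR) : HR :=
  flat_map (fun p1 =>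
    flat_map (fun p2 =>
      map (fun w => (fst p1 * fst p2, w)) (diamond_word (snd p1) (snd p2)))
      b) a.

Fixpoint sumb (w : wordZ) : R :=
  match w with
  | [] => 0
  | (_, b) :: w' => b + sumb w'
  end.

Fixpoint fZ (w : wordZ) : R :=
  match w with
  | [] => 1
  | (s, b) :: w' => / (sumb w ^ s) * fZ w'
  end.

Definition Theta (a : HR) : R :=
  fold_right (fun p acc => fst p * fZ (snd p) + acc) 0 a.

(* The proof transports the problem to words in the letters X.  Give x0 the
   weight 0 and x_b the weight b, and set
      fX(a_1 ... a_n) = 1 / (S_1 S_2 ... S_n),   S_i = weight(a_i ... a_n),
   the product of the inverses of the suffix weights.  Then:
   1. (shuffle identity) for words whose nonempty suffixes have positive
      weight, the sum of fX over the shuffle u ш v equals fX u * fX v; by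
      induction on both words, with A and B the weights of au and bv (every
      word of au ш bv has weight A+B), this reduces to the partial-fraction
      identity  1/(A+B) · (1/B + 1/A) = 1/(A B);
   2. (transport) fZ ∘ rho = fX on such words and fX ∘ rho^{-1} = fZ on
      valid Z-words, since a block x0^{r-1} x_b contributes r equal suffix
      weights, i.e. the factor 1/(b + ...)^r;
   3. (linearity) Theta is additive on concatenations of formal sums, so
      Theta (a ⋄ b) splits into the products fZ w1 * fZ w2, word by word. *)

From Stdlib Require Import Reals List Lra Lia.
Import ListNotations.
Open Scope R_scope.

Definition weight (a : letterX) : R := match a with x0 => 0 | xb b => b end.

Fixpoint total_weight (w : wordX) : R :=
  match w with [] => 0 | a :: w' => weight a + total_weight w' end.

Fixpoint fX (w : wordX) : R :=
  match w with [] => 1 | a :: w' => / total_weight (a :: w') * fX w' end.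

(* A word is admissible when every nonempty suffix has positive weight;
   these are exactly the words on which fX has no vanishing denominators. *)
Fixpoint admissible (w : wordX) : Prop :=
  match w with [] => True | a :: w' => admissible w' /\ 0 < total_weight (a :: w') end.

Definition sum_fX (l : list wordX) : R := fold_right (fun w acc => fX w + acc) 0 l.
Definition sum_fZ (l : list wordZ) : R := fold_right (fun w acc => fZ w + acc) 0 l.

Lemma shuffle_nil_l v : shuffle [] v = [v].
Proof. reflexivity. Qed.

Lemma shuffle_nil_r u : shuffle u [] = [u].
Proof. destruct u; reflexivity. Qed.

Lemma shuffle_cons a u b v : shuffle (a :: u) (b :: v) =
  map (cons a) (shuffle u (b :: v)) ++ map (cons b) (shuffle (a :: u) v).
Proof. reflexivity. Qed.

Lemma admissible_weight_nonneg w : admissible w -> 0 <= total_weight w.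
Proof. destruct w as [|a w]; simpl; lra. Qed.

(* Every shuffle of two admissible words is admissible and carries the sum of
   their weights; this is what makes the denominators in step 1 uniform. *)
Lemma shuffle_admissible u v : admissible u -> admissible v ->
  Forall (fun w => admissible w /\ total_weight w = total_weight u + total_weight v)
    (shuffle u v).
Proof.
  revert v; induction u as [|a u IHu]; intros v Hu Hv.
  - rewrite shuffle_nil_l. constructor; [split; [exact Hv | simpl; ring] | constructor].
  - induction v as [|b v IHv].
    + rewrite shuffle_nil_r. constructor; [split; [exact Hu | simpl; ring] | constructor].
    + rewrite shuffle_cons. apply Forall_app; split; apply Forall_map.
      * destruct Hu as [Hu Ha].
        pose proof (admissible_weight_nonneg _ Hv).
        eapply Forall_impl; [|exact (IHu (b :: v) Hu Hv)].
        intros w [Hw Hs]; simpl in *; repeat split; auto; lra.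
      * destruct Hv as [Hv Hb].
        pose proof (admissible_weight_nonneg _ Hu).
        eapply Forall_impl; [|exact (IHv Hv)].
        intros w [Hw Hs]; simpl in *; repeat split; auto; lra.
Qed.

Lemma sum_fX_app l1 l2 : sum_fX (l1 ++ l2) = sum_fX l1 + sum_fX l2.
Proof. induction l1 as [|w l1 IH]; simpl; [ring|]. unfold sum_fX in *; simpl; rewrite IH; ring. Qed.

Lemma sum_fX_map_cons a s l : Forall (fun w => total_weight w = s) l ->
  sum_fX (map (cons a) l) = / (weight a + s) * sum_fX l.
Proof.
  induction l as [|w l IH]; intros Hl; unfold sum_fX in *; simpl; [ring|].
  apply Forall_inv in Hl as Hw. apply Forall_inv_tail in Hl.
  rewrite IH by exact Hl. simpl. rewrite Hw. ring.
Qed.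

Lemma sum_fX_shuffle u v : admissible u -> admissible v ->
  sum_fX (shuffle u v) = fX u * fX v.
Proof.
  revert v; induction u as [|a u IHu]; intros v Hu Hv.
  - rewrite shuffle_nil_l. unfold sum_fX; simpl. ring.
  - induction v as [|b v IHv].
    + rewrite shuffle_nil_r. unfold sum_fX; simpl. ring.
    + rewrite shuffle_cons, sum_fX_app.
      rewrite (sum_fX_map_cons a (total_weight u + total_weight (b :: v))).
      2: { eapply Forall_impl; [|exact (shuffle_admissible u (b :: v) (proj1 Hu) Hv)].
           intros w [_ Hw]; exact Hw. }
      rewrite (sum_fX_map_cons b (total_weight (a :: u) + total_weight v)).
      2: { eapply Forall_impl; [|exact (shuffle_admissible (a :: u) v Hu (proj1 Hv))].
           intros w [_ Hw]; exact Hw. }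
      rewrite (IHu (b :: v) (proj1 Hu) Hv), (IHv (proj1 Hv)).
      destruct Hu as [_ HA]; destruct Hv as [_ HB]; simpl in *.
      set (A := weight a + total_weight u) in *.
      set (B := weight b + total_weight v) in *.
      replace (weight a + (total_weight u + B)) with (A + B) by (unfold A; ring).
      replace (weight b + (A + total_weight v)) with (A + B) by (unfold B; ring).
      field. lra.
Qed.

Lemma sumb_rho_aux w cnt : sumb (rho_aux cnt w) = total_weight w.
Proof.
  revert cnt; induction w as [|a w IH]; intros cnt; simpl; [reflexivity|].
  destruct a; simpl; rewrite IH; ring.
Qed.

(* Step 2a: with cnt pending letters x0 (which share the suffix weight of w),
   fZ (rho_aux cnt w) = fX w / weight(w)^cnt. *)
Lemma fZ_rho_aux w cnt : admissible w -> (cnt = 0%nat \/ w <> []) ->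
  fZ (rho_aux cnt w) = fX w * / (total_weight w ^ cnt).
Proof.
  revert cnt; induction w as [|a w IH]; intros cnt Hw Hc.
  - destruct Hc as [->|Hc]; [simpl; field|congruence].
  - destruct Hw as [Hw Hpos]. destruct a as [|b]; simpl in *.
    + assert (w <> []) by (intros ->; simpl in Hpos; lra).
      rewrite IH by auto. simpl. rewrite Rplus_0_l, Rinv_mult. ring.
    + rewrite IH by auto. rewrite sumb_rho_aux. simpl. rewrite Rinv_mult, Rinv_1. ring.
Qed.

Lemma fZ_rho w : admissible w -> fZ (rho w) = fX w.
Proof. intros Hw. unfold rho. rewrite fZ_rho_aux by auto. simpl. field. Qed.

Lemma sum_fZ_map_rho l : Forall admissible l -> sum_fZ (map rho l) = sum_fX l.
Proof.
  induction l as [|w l IH]; intros Hl; [reflexivity|].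
  inversion Hl; subst. unfold sum_fZ, sum_fX in *; simpl.
  rewrite IH, fZ_rho by auto. reflexivity.
Qed.

Lemma rho_aux_block k cnt b t :
  rho_aux cnt (repeat x0 k ++ xb b :: t) = (S (k + cnt), b) :: rho_aux 0 t.
Proof.
  revert cnt; induction k as [|k IH]; intros cnt; simpl; [reflexivity|].
  rewrite IH. do 2 f_equal. lia.
Qed.

Lemma rho_rho_inv w : valid_wordZ w -> rho (rho_inv w) = w.
Proof.
  induction w as [|[r b] w IH]; intros Hw; [reflexivity|].
  inversion Hw as [|? ? [Hr _] Hw']; subst; simpl in Hr.
  simpl. unfold rho. rewrite rho_aux_block. f_equal; [f_equal; lia | exact (IH Hw')].
Qed.

Lemma total_weight_block k b t : total_weight (repeat x0 k ++ xb b :: t) = b + total_weight t.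
Proof. induction k as [|k IH]; simpl; [reflexivity|]. rewrite IH; ring. Qed.

Lemma admissible_block k b t : admissible t -> 0 < b -> admissible (repeat x0 k ++ xb b :: t).
Proof.
  intros Ht Hb. pose proof (admissible_weight_nonneg _ Ht).
  induction k as [|k IH]; simpl; split; auto; [lra|].
  rewrite total_weight_block; lra.
Qed.

Lemma admissible_rho_inv w : valid_wordZ w -> admissible (rho_inv w).
Proof.
  induction w as [|[r b] w IH]; intros Hw; simpl; [exact I|].
  inversion Hw as [|? ? [_ Hb] Hw']; subst.
  apply admissible_block; [exact (IH Hw') | exact Hb].
Qed.

Lemma fX_rho_inv w : valid_wordZ w -> fX (rho_inv w) = fZ w.
Proof.
  intros Hw. rewrite <- (fZ_rho _ (admissible_rho_inv w Hw)), rho_rho_inv by exact Hw.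
  reflexivity.
Qed.

Lemma sum_fZ_diamond_word w1 w2 : valid_wordZ w1 -> valid_wordZ w2 ->
  sum_fZ (diamond_word w1 w2) = fZ w1 * fZ w2.
Proof.
  intros H1 H2. unfold diamond_word.
  pose proof (admissible_rho_inv _ H1) as A1. pose proof (admissible_rho_inv _ H2) as A2.
  rewrite sum_fZ_map_rho.
  - rewrite sum_fX_shuffle, !fX_rho_inv by auto. reflexivity.
  - eapply Forall_impl; [|exact (shuffle_admissible _ _ A1 A2)]. intros w [Hw _]; exact Hw.
Qed.

Lemma Theta_app a b : Theta (a ++ b) = Theta a + Theta b.
Proof. induction a as [|p a IH]; simpl; [ring|]. unfold Theta in *; simpl; rewrite IH; ring. Qed.

Lemma Theta_scale c l : Theta (map (fun w => (c, w)) l) = c * sum_fZ l.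
Proof.
  induction l as [|w l IH]; unfold Theta, sum_fZ in *; simpl; [ring|].
  rewrite IH; ring.
Qed.

Lemma Theta_diamond_row c1 w1 b : valid_wordZ w1 -> valid_HR b ->
  Theta (flat_map (fun p2 => map (fun w => (c1 * fst p2, w)) (diamond_word w1 (snd p2))) b)
  = c1 * fZ w1 * Theta b.
Proof.
  intros H1 Hb. induction b as [|[c2 w2] b IH]; [unfold Theta; simpl; ring|].
  inversion Hb as [|? ? H2 Hb']; subst; simpl in H2.
  simpl. rewrite Theta_app, Theta_scale, IH, sum_fZ_diamond_word by auto.
  unfold Theta; simpl. ring.
Qed.

Theorem corollary2p5 :
  Theta HR_one = 1 /\
  (forall a b : HR, valid_HR a -> valid_HR b ->
     Theta (diamond a b) = Theta a * Theta b).
Proof.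
  split.
  - unfold Theta, HR_one; simpl; ring.
  - intros a b Ha Hb. induction a as [|[c1 w1] a IH]; [unfold Theta; simpl; ring|].
    inversion Ha as [|? ? H1 Ha']; subst; simpl in H1.
    unfold diamond; simpl. rewrite Theta_app. fold (diamond a b).
    rewrite IH, Theta_diamond_row by auto.
    unfold Theta; simpl. ring.
Qed.
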